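(* Let $\widehat{\zeta}_1,\dots,\widehat{\zeta}_N\in\mathbb{R}$, $\widehat{\mathbb{P}}_N=\frac1N\sum_{i=1}^N\delta_{\widehat{\zeta}_i}$, $\eta\in\mathbb{R}$, $\bar\zeta=\frac1N\sum_{i=1}^N\widehat{\zeta}_i$ and $\widehat\sigma^2=\frac1N\sum_{i=1}^N(\widehat{\zeta}_i-\eta)^2$. Let $\varepsilon>0$ with $\varepsilon^2\ge(\bar\zeta-\eta)^2$. Then $$\sup\Big\{\mathbb{E}_{\mathbb{Q}}[(\zeta-\eta)^2]:\ \mathbb{Q}\in\mathcal{P}_2(\mathbb{R}),\ W_2(\mathbb{Q},\widehat{\mathbb{P}}_N)\le\varepsilon,\ \mathbb{E}_{\mathbb{Q}}[\zeta]=\eta\Big\}=\Big(\sqrt{\widehat\sigma^2-(\bar\zeta-\eta)^2}+\sqrt{\varepsilon^2-(\bar\zeta-\eta)^2}\Big)^2.$$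
   Context: $\mathcal{P}_2(\mathbb{R})$ is the set of Borel probability measures on $\mathbb{R}$ with finite second moment, and $W_2(\mu,\nu)=(\inf_\Pi\int|s-t|^2\,\Pi(ds,dt))^{1/2}$, the infimum over couplings $\Pi$ of $\mu$ and $\nu$. *)

From HB Require Import structures.
From mathcomp Require Import all_boot all_order all_algebra.
From mathcomp Require Import all_classical all_reals all_analysis.
Set Implicit Arguments. Unset Strict Implicit. Unset Printing Implicit Defensive.
Import Order.TTheory GRing.Theory Num.Theory.
Import numFieldNormedType.Exports.
Local Open Scope classical_set_scope.
Local Open Scope ring_scope.
Local Open Scope ereal_scope.

(* Borel probability measures on R: [probability R R] (R with its canonical
   Borel sigma-algebra).  Finite second moment: *)
Definition finite_second_moment (R : realType) (Q : probability R R) : Prop :=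
  \int[Q]_x (x ^+ 2)%:E < +oo.

Definition empirical (R : realType) (N : nat) (zeta : 'I_N -> R) (A : set R)
  : \bar R :=
  (N%:R^-1)%:E * \sum_(i < N) \d_(zeta i) A.

Definition coupling (R : realType) (mu nu : set R -> \bar R)
  (Pi : probability (R * R)%type R) : Prop :=
  forall A : set R, measurable A ->
    Pi (A `*` setT) = mu A /\ Pi (setT `*` A) = nu A.

Definition W2sq (R : realType) (mu nu : set R -> \bar R) : \bar R :=
  ereal_inf [set \int[Pi]_p (`|p.1 - p.2| ^+ 2)%:E
            | Pi in [set Pi | coupling mu nu Pi]].

Definition W2 (R : realType) (mu nu : set R -> \bar R) : \bar R :=
  match W2sq mu nu with
  | r%:E => (Num.sqrt r)%:E
  | +oo => +oo
  | -oo => 0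
  end.

(* Write m = zbar - eta, v = sigma2 - m^2 (the empirical variance about zbar)
   and w = eps^2 - m^2.
   Upper bound: let Pi couple Q with the empirical measure at transport cost c
   and let (x, y) ~ Pi.  Since x - eta = (y - zbar) + (x - y + m), for every
   lam > 0 we have (x - eta)^2 <= (1 + lam) (y - zbar)^2 + (1 + 1/lam) (x - y + m)^2;
   integrating, with E[x] = eta and E[y] = zbar, gives
   E_Q[(x - eta)^2] <= (1 + lam) v + (1 + 1/lam) (c - m^2).  Letting c decrease
   to W2^2 <= eps^2 and optimizing over lam yields (sqrt v + sqrt w)^2.
   Lower bound: with t = sqrt w / sqrt v and s^2 = w - t^2 v, the uniform measure
   on the 2N points eta + (1 + t) (zeta_i - zbar) +- s has mean eta and second
   moment (sqrt v + sqrt w)^2 about eta, and pairing each of these points with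
   zeta_i is a coupling of cost exactly eps^2. *)

From HB Require Import structures.
From mathcomp Require Import all_boot all_order all_algebra.
From mathcomp Require Import all_classical all_reals all_analysis.
From mathcomp Require Import measurable_realfun ring lra.
Set Implicit Arguments. Unset Strict Implicit. Unset Printing Implicit Defensive.
Import Order.TTheory GRing.Theory Num.Theory.
Import numFieldNormedType.Exports.
Local Open Scope classical_set_scope.
Local Open Scope ring_scope.

Lemma sqrD_le_weighted (R : realFieldType) (lam a b : R) : 0 < lam ->
  (a + b) ^+ 2 <= (1 + lam) * a ^+ 2 + (1 + lam^-1) * b ^+ 2.
Proof.
move=> lam0; rewrite -subr_ge0.
have -> : (1 + lam) * a ^+ 2 + (1 + lam^-1) * b ^+ 2 - (a + b) ^+ 2
    = lam^-1 * (lam * a - b) ^+ 2 by field; rewrite gt_eqF.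
by rewrite mulr_ge0 ?sqr_ge0 ?invr_ge0 ?ltW.
Qed.

Lemma le_sqrD_of_weighted (R : realFieldType) (S a b : R) : 0 <= a -> 0 <= b ->
  (forall lam, 0 < lam -> S <= (1 + lam) * a ^+ 2 + (1 + lam^-1) * b ^+ 2) ->
  S <= (a + b) ^+ 2.
Proof.
move=> a0 b0 hS.
have frac_le (x y t : R) : 0 <= x -> 0 <= y -> 0 < t ->
    (y + t) / (x + t) * x ^+ 2 <= (y + t) * x.
  move=> x0 y0 t0; rewrite mulrAC -mulrA ler_pM2l; last lra.
  by rewrite ler_pdivrMr; [rewrite expr2; nra | lra].
(* (b + t) / (a + t) approximates the optimal weight b / a, undefined if a = 0 *)
have near_opt t : 0 < t -> S <= (a + b) ^+ 2 + t * (a + b).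
  move=> t0; have lam0 : 0 < (b + t) / (a + t) by apply: divr_gt0; lra.
  apply: (le_trans (hS _ lam0)); rewrite invf_div !mulrDl !mul1r.
  have := frac_le a b t a0 b0 t0; have := frac_le b a t b0 a0 t0; lra.
apply/ler_addgt0Pr => e e0; have ab1 : 0 < a + b + 1 by lra.
apply: (le_trans (near_opt _ (divr_gt0 e0 ab1))); rewrite lerD2l.
by rewrite mulrAC ler_pdivrMr //; nra.
Qed.

Section centered_sums.
Context (R : fieldType) (n : nat) (z : 'I_n -> R).
Hypothesis n_neq0 : n%:R != 0 :> R.
Let zbar := (\sum_(i < n) z i) / n%:R.

Lemma sum_sub_mean : \sum_(i < n) (z i - zbar) = 0.
Proof. by rewrite sumrB sumr_const card_ord -mulr_natr mulfVK ?subrr. Qed.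

Lemma sum_sqr_sub_mean (e : R) :
  \sum_(i < n) (z i - e) ^+ 2 =
  \sum_(i < n) (z i - zbar) ^+ 2 + n%:R * (zbar - e) ^+ 2.
Proof.
have expand i : (z i - e) ^+ 2 =
    (z i - zbar) ^+ 2 + (z i - zbar) * (2 * (zbar - e)) + (zbar - e) ^+ 2.
  by ring.
rewrite (eq_bigr _ (fun i _ => expand i)) !big_split /= -mulr_suml sum_sub_mean.
by rewrite mul0r addr0 sumr_const card_ord mulr_natl.
Qed.

End centered_sums.

Lemma sqrt_ratio_identities (R : rcfType) (v w : R) : 0 <= v -> 0 <= w ->
  let t := Num.sqrt w / Num.sqrt v in
  t * v = Num.sqrt v * Num.sqrt w /\
  t ^+ 2 * v + Num.sqrt (w - t ^+ 2 * v) ^+ 2 = w.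
Proof.
move=> v0 w0 t; rewrite {}/t; have [->|v_neq0] := eqVneq v 0.
  by rewrite sqrtr0 invr0 !(mulr0, mul0r, subr0) sqr_sqrtr ?add0r.
have sv_neq0 : Num.sqrt v != 0 by rewrite sqrtr_eq0 -ltNge lt0r v_neq0.
set t := Num.sqrt w / _.
have tv : t ^+ 2 * v = w.
  by rewrite /t expr_div_n !sqr_sqrtr // divfK.
split; last by rewrite tv subrr sqrtr0 expr0n addr0.
by rewrite /t -{2}(sqr_sqrtr v0) expr2 mulrA divfK // mulrC.
Qed.

Section uniform_atoms.
Context d (T : measurableType d) (R : realType) (n : nat) (pt : 'I_n.+1 -> T).

Definition uniform_atoms : set T -> \bar R :=
  mscale (n.+1%:R^-1)%:nng (msum (fun k => \d_(pt (inord k))) n.+1).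

HB.instance Definition _ := Measure.on uniform_atoms.

Lemma uniform_atomsE A :
  uniform_atoms A = (n.+1%:R^-1 * \sum_(i < n.+1) \1_A (pt i))%:E.
Proof.
rewrite /uniform_atoms /mscale /msum /= EFinM -sumEFin.
by congr (_ * _)%E; apply: eq_bigr => i _; rewrite inord_val.
Qed.

Let uniform_atoms_setT : uniform_atoms setT = 1%E.
Proof.
rewrite uniform_atomsE; under eq_bigr do rewrite indicT.
by rewrite sumr_const card_ord -mulr_natr mul1r mulVf.
Qed.

HB.instance Definition _ :=
  Measure_isProbability.Build _ _ _ uniform_atoms uniform_atoms_setT.

Local Open Scope ereal_scope.

Lemma ge0_integral_uniform_atoms (f : T -> \bar R) :
  measurable_fun setT f -> (forall x, 0 <= f x) ->
  \int[uniform_atoms]_x f x = (n.+1%:R^-1)%:E * \sum_(i < n.+1) f (pt i).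
Proof.
move=> mf f0; rewrite ge0_integral_mscale//; congr (_ * _).
rewrite ge0_integral_measure_sum//; apply: eq_bigr => i _.
by rewrite integral_dirac// diracT mul1e inord_val.
Qed.

Lemma integral_uniform_atoms (f : T -> R) : measurable_fun setT f ->
  \int[uniform_atoms]_x (f x)%:E = (n.+1%:R^-1 * \sum_(i < n.+1) f (pt i))%:E.
Proof.
move=> mf; have mF : measurable_fun setT (EFin \o f) by exact/measurable_EFinP.
rewrite integralE !ge0_integral_uniform_atoms//; last 2 first.
- exact: measurable_funeneg.
- exact: measurable_funepos.
have posE i : (EFin \o f)^\+ (pt i) = (Num.max (f (pt i)) 0)%:E.
  by rewrite funeposE /= EFin_max.
have negE i : (EFin \o f)^\- (pt i) = (Num.max (- f (pt i)) 0)%:E.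
  by rewrite funenegE /= EFin_max.
under eq_bigr do rewrite posE.
under [X in _ - _ * X]eq_bigr do rewrite negE.
rewrite !sumEFin -!EFinM -EFinB -mulrBr -sumrB; congr (_ * _)%R%:E.
apply: eq_bigr => i _; case: (lerP 0 (f (pt i))) => fi.
  by rewrite max_r ?subr0// oppr_le0.
by rewrite max_l ?sub0r ?opprK// oppr_ge0 ltW.
Qed.

Lemma integrable_uniform_atoms (f : T -> R) : measurable_fun setT f ->
  uniform_atoms.-integrable setT (EFin \o f).
Proof.
move=> mf; apply/integrableP; split; first exact/measurable_EFinP.
rewrite (eq_integral (fun x => ((Num.norm \o f) x)%:E))//.
by rewrite integral_uniform_atoms ?ltry//; exact: measurableT_comp.
Qed.

End uniform_atoms.

Arguments uniform_atoms {d T R n}.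

Section image_measure.
Context d1 d2 (X : measurableType d1) (Y : measurableType d2) (R : realType).
Variables (phi : X -> Y) (mu : measure X R) (nu : measure Y R).
Hypotheses (mphi : measurable_fun setT phi)
  (mu_phi : forall A, measurable A -> mu (phi @^-1` A) = nu A).
Local Open Scope ereal_scope.

Lemma integral_image_measure (f : Y -> \bar R) : measurable_fun setT f ->
  \int[mu]_x f (phi x) = \int[nu]_y f y.
Proof.
move=> mf.
rewrite (eq_measure_integral (pushforward mu phi)); last first.
  by move=> A mA _; rewrite -mu_phi.
rewrite integralE [RHS]integralE.
have mp := measurable_funepos mf; have mn := measurable_funeneg mf.
rewrite (ge0_integral_pushforward mphi mu measurableT mp); last first.
  by move=> y _; exact: funepos_ge0.
rewrite (ge0_integral_pushforward mphi mu measurableT mn); last first.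
  by move=> y _; exact: funeneg_ge0.
by rewrite preimage_setT funepos_comp funeneg_comp.
Qed.

Lemma integrable_image_measure (f : Y -> \bar R) :
  nu.-integrable setT f -> mu.-integrable setT (f \o phi).
Proof.
move=> /integrableP[mf fint]; apply/integrableP; split.
  exact: measurableT_comp.
have mnf : measurable_fun setT (fun y => `|f y|) by exact: measurableT_comp.
by rewrite (integral_image_measure mnf).
Qed.

End image_measure.

Section coupling_marginals.
Context (R : realType) (mu nu : set R -> \bar R) (Pi : probability (R * R)%type R).
Hypothesis Pi_coupling : coupling mu nu Pi.

Lemma coupling_fst A : measurable A -> Pi (fst @^-1` A) = mu A.
Proof. by move=> mA; rewrite -setXT; case: (Pi_coupling mA). Qed.

Lemma coupling_snd A : measurable A -> Pi (snd @^-1` A) = nu A.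
Proof. by move=> mA; rewrite -setTX; case: (Pi_coupling mA). Qed.

End coupling_marginals.

Section W2_facts.
Context (R : realType) (mu nu : set R -> \bar R).
Local Open Scope ereal_scope.

Lemma W2sq_ge0 : 0 <= W2sq mu nu.
Proof.
apply: le_ereal_inf_tmp => _ [Pi _ <-]; apply: integral_ge0 => p _.
by rewrite lee_fin sqr_ge0.
Qed.

Lemma W2_le_sqr (e : R) : (0 <= e)%R ->
  (W2 mu nu <= e%:E) = (W2sq mu nu <= (e ^+ 2)%:E).
Proof.
move=> e0; rewrite /W2; have := W2sq_ge0; case: (W2sq mu nu) => [r| |] //= r0.
by rewrite !lee_fin -(ler_sqrt r (sqr_ge0 e)) sqrtr_sqr ger0_norm.
Qed.

Lemma W2sq_le_cost (Pi : probability (R * R)%type R) : coupling mu nu Pi ->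
  W2sq mu nu <= \int[Pi]_p (`|p.1 - p.2| ^+ 2)%:E.
Proof. by move=> hPi; apply: ereal_inf_lbound; exists Pi. Qed.

Lemma coupling_cost_lt (r del : R) : W2sq mu nu <= r%:E -> (0 < del)%R ->
  exists2 Pi : probability (R * R)%type R, coupling mu nu Pi &
    \int[Pi]_p (`|p.1 - p.2| ^+ 2)%:E < (r + del)%:E.
Proof.
move=> Wr del0; have /ereal_inf_lt[_ [Pi hPi <-] lt_r] : W2sq mu nu < (r + del)%:E.
  by rewrite (le_lt_trans Wr)// lte_fin ltrDl.
by exists Pi.
Qed.

End W2_facts.

Lemma finite_second_moment_integrable (R : realType) (Q : probability R R) :
  finite_second_moment Q -> Q.-integrable setT EFin.
Proof.
move=> Q2.
apply: (@le_integrable _ _ _ Q _ _ _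
  ((EFin \o cst 1%R) \+ (fun x => (x ^+ 2)%:E))%E) => //.
- move=> x _ /=; rewrite lee_fin (@ger0_norm _ (1 + x ^+ 2)).
    rewrite -[x ^+ 2]real_normK ?num_real//.
    have := sqr_ge0 (`|x| - 1); have := normr_ge0 x; move: `|x| => y; nra.
  by rewrite addr_ge0 ?sqr_ge0.
- apply: integrableD => //; first exact: finite_measure_integrable_cst.
  apply/integrableP; split; first by apply/measurable_EFinP; exact: measurable_funX.
  rewrite (eq_integral (fun x : R => (x ^+ 2)%:E)) // => x _.
  by rewrite abse_EFin ger0_norm ?sqr_ge0.
Qed.

Lemma integral_coupling_sum (R : realType) (mu nu : measure R R)
    (Pi : probability (R * R)%type R) (k : R * R -> R) (f g : R -> R) :
  coupling mu nu Pi -> Pi.-integrable setT (EFin \o k) ->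
  mu.-integrable setT (EFin \o f) -> nu.-integrable setT (EFin \o g) ->
  (\int[Pi]_p (k p + f p.1 + g p.2)%:E =
   \int[Pi]_p (k p)%:E + \int[mu]_x (f x)%:E + \int[nu]_y (g y)%:E)%E.
Proof.
move=> hPi ik if_ ig.
have mfst : measurable_fun setT (@fst R R) by exact: measurable_fst.
have msnd : measurable_fun setT (@snd R R) by exact: measurable_snd.
have if1 := integrable_image_measure mfst (coupling_fst hPi) if_.
have ig2 := integrable_image_measure msnd (coupling_snd hPi) ig.
under eq_integral do rewrite !EFinD.
rewrite integralD//; last exact: integrableD.
rewrite integralD//.
rewrite (integral_image_measure mfst (coupling_fst hPi) (measurable_int _ if_)).
by rewrite (integral_image_measure msnd (coupling_snd hPi) (measurable_int _ ig)).
Qed.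

Section empirical_moments.
Context (R : realType) (n : nat) (zeta : 'I_n.+1 -> R) (eta : R).
Let zbar := (\sum_(i < n.+1) zeta i) / n.+1%:R.
Let sigma2 := (\sum_(i < n.+1) (zeta i - eta) ^+ 2) / n.+1%:R.
Let m := zbar - eta.

Lemma empirical_uniform_atoms : empirical zeta = uniform_atoms zeta.
Proof.
apply/funext => A; rewrite uniform_atomsE /empirical EFinM -sumEFin.
by congr (_ * _)%E; apply: eq_bigr => i _; rewrite indicE diracE.
Qed.

Lemma empirical_variance :
  (\sum_(i < n.+1) (zeta i - zbar) ^+ 2) / n.+1%:R = sigma2 - m ^+ 2.
Proof.
have n_neq0 : n.+1%:R != 0 :> R by rewrite pnatr_eq0.
by rewrite /sigma2 (sum_sqr_sub_mean zeta n_neq0 eta) mulrDl mulrAC divff ?mul1r ?addrK.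
Qed.

Lemma empirical_variance_ge0 : 0 <= sigma2 - m ^+ 2.
Proof.
by rewrite -empirical_variance divr_ge0 ?sumr_ge0// => i _; rewrite sqr_ge0.
Qed.

Lemma integral_empirical_quadratic (a b c : R) :
  (\int[uniform_atoms zeta]_y (a * (y - zbar) ^+ 2 + b * y + c)%:E =
   (a * (sigma2 - m ^+ 2) + b * zbar + c)%:E)%E.
Proof.
rewrite integral_uniform_atoms; last first.
  by apply: measurable_funD => //; apply: measurable_funD => //;
     apply: measurable_funM => //; apply: measurable_funX; exact: measurable_funB.
congr EFin; rewrite !big_split /= -!mulr_sumr sumr_const card_ord.
rewrite -empirical_variance -mulr_natr /zbar.
by field; rewrite nat1r pnatr_eq0.
Qed.

Section coupling_bound.
Variables (Q : probability R R) (Pi : probability (R * R)%type R) (c lam : R).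
Hypotheses (Q2 : finite_second_moment Q) (Qmean : (\int[Q]_x x%:E = eta%:E)%E)
  (Pi_coupling : coupling Q (empirical zeta) Pi)
  (Pi_cost : (\int[Pi]_p (`|p.1 - p.2| ^+ 2)%:E = c%:E)%E) (lam_gt0 : 0 < lam).

Let l' := 1 + lam^-1.
Let k (p : R * R) := l' * (p.1 - p.2) ^+ 2.
Let f (x : R) := 2 * m * l' * x.
Let g (y : R) := (1 + lam) * (y - zbar) ^+ 2 + - (2 * m * l') * y + l' * m ^+ 2.

Let weighted_split p : (p.1 - eta) ^+ 2 <= k p + f p.1 + g p.2.
Proof.
have -> : k p + f p.1 + g p.2 =
    (1 + lam) * (p.2 - zbar) ^+ 2 + l' * (p.1 - p.2 + m) ^+ 2.
  by rewrite /k /f /g /m; ring.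
have -> : p.1 - eta = (p.2 - zbar) + (p.1 - p.2 + m) by rewrite /m; ring.
exact: sqrD_le_weighted.
Qed.

Let mk : measurable_fun setT k.
Proof.
apply: measurable_funM => //; apply: measurable_funX.
by apply: measurable_funB; [exact: measurable_fst | exact: measurable_snd].
Qed.

Let mg : measurable_fun setT g.
Proof.
apply: measurable_funD => //; apply: measurable_funD => //.
by apply: measurable_funM => //; apply: measurable_funX; exact: measurable_funB.
Qed.

Let integral_sqr_diff : (\int[Pi]_p ((p.1 - p.2) ^+ 2)%:E = c%:E)%E.
Proof.
by rewrite -Pi_cost; apply: eq_integral => p _; rewrite -normrX ger0_norm ?sqr_ge0.
Qed.

Let integrable_sqr_diff : Pi.-integrable setT (fun p => ((p.1 - p.2) ^+ 2)%:E).
Proof.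
apply/integrableP; split.
  apply/measurable_EFinP; apply: measurable_funX.
  by apply: measurable_funB; [exact: measurable_fst | exact: measurable_snd].
by under eq_integral do rewrite abse_EFin normrX; rewrite Pi_cost ltry.
Qed.

Let integral_weighted_split :
  (\int[Pi]_p (k p + f p.1 + g p.2)%:E =
   ((1 + lam) * (sigma2 - m ^+ 2) + l' * (c - m ^+ 2))%:E)%E.
Proof.
have hPi : coupling Q (uniform_atoms zeta) Pi by rewrite -empirical_uniform_atoms.
have iQ := finite_second_moment_integrable Q2.
have ik : Pi.-integrable setT (EFin \o k).
  apply: (eq_integrable measurableT _ _ _
    (integrableZl measurableT l' integrable_sqr_diff)).
  by move=> p _; rewrite /= EFinM.
have if_ : Q.-integrable setT (EFin \o f).
  apply: (eq_integrable measurableT _ _ _ (integrableZl measurableT (2 * m * l') iQ)).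
  by move=> x _; rewrite /= EFinM.
rewrite (integral_coupling_sum hPi ik if_ (integrable_uniform_atoms zeta mg)).
rewrite integral_empirical_quadratic.
under eq_integral do rewrite EFinM.
rewrite (integralZl measurableT integrable_sqr_diff) integral_sqr_diff.
under [X in (_ + X + _)%E]eq_integral do rewrite EFinM.
rewrite (integralZl measurableT iQ) Qmean -!EFinM -!EFinD.
by congr EFin; rewrite /m; ring.
Qed.

Lemma second_moment_le_cost :
  (\int[Q]_x ((x - eta) ^+ 2)%:E <=
   ((1 + lam) * (sigma2 - m ^+ 2) + (1 + lam^-1) * (c - m ^+ 2))%:E)%E.
Proof.
have mfst : measurable_fun setT (@fst R R) by exact: measurable_fst.
rewrite -(integral_image_measure mfst (coupling_fst Pi_coupling)
  (f := fun x => ((x - eta) ^+ 2)%:E)); last first.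
  by apply/measurable_EFinP; apply: measurable_funX; exact: measurable_funB.
rewrite -integral_weighted_split; apply: ge0_le_integral => //.
- by move=> p _; rewrite lee_fin sqr_ge0.
- apply/measurable_EFinP; apply: measurable_funX.
  by apply: measurable_funB => //; exact: measurable_fst.
- apply/measurable_EFinP; apply: measurable_funD; last first.
    by apply: measurableT_comp mg _; exact: measurable_snd.
  apply: measurable_funD; first exact: mk.
  by apply: measurableT_comp; [exact: measurable_funM | exact: measurable_fst].
- by move=> p _; rewrite lee_fin.
Qed.

End coupling_bound.

Lemma second_moment_le_weighted (Q : probability R R) (eps lam : R) :
  finite_second_moment Q -> (W2sq Q (empirical zeta) <= (eps ^+ 2)%:E)%E ->
  (\int[Q]_x x%:E = eta%:E)%E -> 0 < lam ->
  (\int[Q]_x ((x - eta) ^+ 2)%:E <=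
   ((1 + lam) * (sigma2 - m ^+ 2) + (1 + lam^-1) * (eps ^+ 2 - m ^+ 2))%:E)%E.
Proof.
move=> Q2 QW Qmean lam0; set l' := 1 + lam^-1.
have l'0 : 0 < l' by rewrite ltr_wpDr ?invr_ge0 ?ltW.
apply/lee_addgt0Pr => e e0.
have [Pi Pi_coupling cost_lt] := coupling_cost_lt QW (divr_gt0 e0 l'0).
have cost0 : (0 <= \int[Pi]_p (`|p.1 - p.2| ^+ 2)%:E)%E.
  by apply: integral_ge0 => p _; rewrite lee_fin sqr_ge0.
have cost_fin : (\int[Pi]_p (`|p.1 - p.2| ^+ 2)%:E)%E \is a fin_num.
  by rewrite ge0_fin_numE // (lt_le_trans cost_lt) ?leey.
have Pi_cost := esym (fineK cost_fin); set c := fine _ in Pi_cost.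
rewrite Pi_cost lte_fin in cost_lt.
apply: (le_trans (second_moment_le_cost Q2 Qmean Pi_coupling Pi_cost lam0)).
rewrite -EFinD lee_fin -addrA lerD2l.
have /ltW c_le : c - m ^+ 2 < eps ^+ 2 - m ^+ 2 + e / l' by lra.
apply: (le_trans (ler_wpM2l (ltW l'0) c_le)).
by rewrite mulrDr mulrCA divff ?mulr1 // lt0r_neq0.
Qed.

Lemma second_moment_le_W2_ball (Q : probability R R) (eps : R) :
  0 <= eps -> m ^+ 2 <= eps ^+ 2 ->
  finite_second_moment Q -> (W2 Q (empirical zeta) <= eps%:E)%E ->
  (\int[Q]_x x%:E = eta%:E)%E ->
  (\int[Q]_x ((x - eta) ^+ 2)%:E <=
   ((Num.sqrt (sigma2 - m ^+ 2) + Num.sqrt (eps ^+ 2 - m ^+ 2)) ^+ 2)%:E)%E.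
Proof.
move=> eps0 hball Q2 QW Qmean; rewrite W2_le_sqr // in QW.
have weighted := second_moment_le_weighted Q2 QW Qmean.
have S0 : (0 <= \int[Q]_x ((x - eta) ^+ 2)%:E)%E.
  by apply: integral_ge0 => x _; rewrite lee_fin sqr_ge0.
move: S0 weighted; case: (\int[Q]_x _)%E => [S _ weighted | _ weighted | //].
  rewrite lee_fin; apply: le_sqrD_of_weighted; rewrite ?sqrtr_ge0 // => lam lam0.
  rewrite !sqr_sqrtr ?empirical_variance_ge0 ?subr_ge0 //.
  by have := weighted lam lam0; rewrite lee_fin.
by have := weighted 1 ltr01.
Qed.

End empirical_moments.

Section extremal_measure.
Context (R : realType) (n : nat) (zeta : 'I_n.+1 -> R) (eta eps : R).
Let zbar := (\sum_(i < n.+1) zeta i) / n.+1%:R.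
Let sigma2 := (\sum_(i < n.+1) (zeta i - eta) ^+ 2) / n.+1%:R.
Let m := zbar - eta.
Hypothesis hball : m ^+ 2 <= eps ^+ 2.
Let v := sigma2 - m ^+ 2.
Let w := eps ^+ 2 - m ^+ 2.
(* When v = 0, t = 0 (division by 0 yields 0) and all of w goes into the +-s split. *)
Let t := Num.sqrt w / Num.sqrt v.
Let s := Num.sqrt (w - t ^+ 2 * v).
Let x (i : 'I_n.+1) := eta + (1 + t) * (zeta i - zbar).

Definition extremal_atom (k : 'I_(n.+1 + n.+1)) : R * R :=
  match fintype.split k with
  | inl i => (x i + s, zeta i)
  | inr i => (x i - s, zeta i)
  end.

Definition extremal_coupling : probability (R * R)%type R :=
  uniform_atoms (n := n + n.+1) extremal_atom.

Definition extremal_measure : probability R R :=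
  uniform_atoms (n := n + n.+1) (fst \o extremal_atom).

Lemma sum_extremal_atoms (F : R * R -> R) :
  \sum_(k < n.+1 + n.+1) F (extremal_atom k) =
  \sum_(i < n.+1) (F (x i + s, zeta i) + F (x i - s, zeta i)).
Proof.
rewrite big_split_ord big_split /=; congr (_ + _); apply: eq_bigr => i _.
  by rewrite /extremal_atom (unsplitK (inl i)).
by rewrite /extremal_atom (unsplitK (inr i)).
Qed.

Lemma mean_extremal_quadratic (F : R * R -> R) (a b c : R) :
  (forall i, F (x i + s, zeta i) + F (x i - s, zeta i) =
     2 * (a * (zeta i - zbar) ^+ 2 + b * (zeta i - zbar) + c)) ->
  (n + n.+1).+1%:R^-1 * \sum_(k < n.+1 + n.+1) F (extremal_atom k) = a * v + c.
Proof.
move=> hF; rewrite sum_extremal_atoms (eq_bigr _ (fun i _ => hF i)).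
have n_neq0 : n.+1%:R != 0 :> R by rewrite pnatr_eq0.
rewrite -mulr_sumr !big_split /= -!mulr_sumr sum_sub_mean // mulr0 addr0.
rewrite /v -empirical_variance sumr_const card_ord -addSn natrD -mulr2n.
by field; rewrite nat1r pnatr_eq0.
Qed.

Let v0 : 0 <= v. Proof. exact: empirical_variance_ge0. Qed.
Let w0 : 0 <= w. Proof. by rewrite subr_ge0. Qed.

Lemma extremal_measure_mean : (\int[extremal_measure]_y y%:E = eta%:E)%E.
Proof.
rewrite integral_uniform_atoms //; congr EFin.
by rewrite (@mean_extremal_quadratic (fun p => p.1) 0 (1 + t) eta) ?mul0r ?add0r //
  => i; rewrite /x /=; ring.
Qed.

Lemma extremal_measure_variance :
  (\int[extremal_measure]_y ((y - eta) ^+ 2)%:E =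
   ((Num.sqrt v + Num.sqrt w) ^+ 2)%:E)%E.
Proof.
rewrite integral_uniform_atoms; last first.
  by apply: measurable_funX; exact: measurable_funB.
congr EFin; have [tv ts] := sqrt_ratio_identities v0 w0.
rewrite (@mean_extremal_quadratic (fun p => (p.1 - eta) ^+ 2) ((1 + t) ^+ 2) 0 (s ^+ 2));
  last by move=> i; rewrite /x /=; ring.
rewrite -/t -/s in tv ts.
by rewrite [RHS]sqrrD ![in RHS]sqr_sqrtr // -tv -[in RHS]ts; ring.
Qed.

Lemma extremal_measure_finite_second_moment :
  finite_second_moment extremal_measure.
Proof.
by rewrite /finite_second_moment integral_uniform_atoms ?ltry //; exact: measurable_funX.
Qed.

Lemma coupling_extremal :
  coupling extremal_measure (empirical zeta) extremal_coupling.
Proof.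
move=> A mA; rewrite /extremal_coupling /extremal_measure empirical_uniform_atoms.
split; rewrite [LHS]uniform_atomsE [RHS]uniform_atomsE; congr EFin.
  congr (_ * _); apply: eq_bigr => k _.
  by rewrite !indicE in_setX in_setT andbT.
have indic_snd (p : R * R) : \1_(setT `*` A) p = \1_A p.2 :> R.
  by rewrite !indicE in_setX in_setT.
rewrite sum_extremal_atoms; under eq_bigr do rewrite !indic_snd /= -mulr2n.
rewrite sumrMnl -mulr_natr -addSn natrD -mulr2n -mulr_natl.
by field; rewrite nat1r pnatr_eq0.
Qed.

Lemma extremal_coupling_cost :
  (\int[extremal_coupling]_p (`|p.1 - p.2| ^+ 2)%:E = (eps ^+ 2)%:E)%E.
Proof.
rewrite integral_uniform_atoms; last first.
  apply: measurable_funX; apply: measurableT_comp => //.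
  by apply: measurable_funB; [exact: measurable_fst | exact: measurable_snd].
congr EFin; have [_ ts] := sqrt_ratio_identities v0 w0; rewrite -/t -/s in ts.
rewrite (@mean_extremal_quadratic (fun p => `|p.1 - p.2| ^+ 2) (t ^+ 2) (- 2 * t * m)
  (m ^+ 2 + s ^+ 2)); first by rewrite addrCA ts /w addrC subrK.
by move=> i; rewrite /= !real_normK ?num_real // /x /m; ring.
Qed.

Lemma extremal_measure_W2 : 0 <= eps ->
  (W2 extremal_measure (empirical zeta) <= eps%:E)%E.
Proof.
move=> eps0; rewrite W2_le_sqr // -extremal_coupling_cost.
exact/W2sq_le_cost/coupling_extremal.
Qed.

End extremal_measure.

Theorem theorem5 (R : realType) (N : nat) (hN : (0 < N)%N)
  (zeta : 'I_N -> R) (eta eps : R) (heps : 0 < eps)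
  (hball : eps ^+ 2 >= ((\sum_(i < N) zeta i) / N%:R - eta) ^+ 2) :
  let zbar := (\sum_(i < N) zeta i) / N%:R in
  let sigma2 := (\sum_(i < N) (zeta i - eta) ^+ 2) / N%:R in
  ereal_sup [set (\int[Q]_x ((x - eta) ^+ 2)%:E)%E
            | Q in [set Q : probability R R |
                      [/\ finite_second_moment Q,
                          (W2 (Q : set R -> \bar R) (empirical zeta) <= eps%:E)%E
                        & (\int[Q]_x x%:E = eta%:E)%E]]]
  = ((Num.sqrt (sigma2 - (zbar - eta) ^+ 2)
      + Num.sqrt (eps ^+ 2 - (zbar - eta) ^+ 2)) ^+ 2)%:E.
Proof.
move: zeta hball; case: N hN => [//|n] _ zeta hball zbar sigma2.
apply: le_anti; apply/andP; split.
  apply: ge_ereal_sup => _ [Q [Q2 QW Qmean] <-].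
  exact: second_moment_le_W2_ball (ltW heps) hball Q2 QW Qmean.
rewrite -(extremal_measure_variance hball).
apply: ereal_sup_ubound; exists (extremal_measure zeta eta eps) => //.
split; first exact: extremal_measure_finite_second_moment.
  exact: extremal_measure_W2 (ltW heps).
exact: extremal_measure_mean.
Qed.
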